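(* Let $u\in\Omega_0^M$. For every node $v$ of the binary tree $B_\Lambda(u)$ with descendents $v_l,v_r$, one has $\tau(v)\le\tau(v_l)$ and $\tau(v)\le\tau(v_r)$, with at least one of these inequalities strict. In particular $\tau$ is non-decreasing along every path in $B_\Lambda(u)$ starting at the root $u$.
   Context: $\kappa(x,y,z)=-x^2-y^2+z^2+xyz-2$; for $u=(x,y,z)$ set $\bar z(u)=-xy-z$ and $\tau(u)=-z\,\bar z(u)$. $Q_x(x,y,z)=(yz-x,y,z)$, $Q_y(x,y,z)=(x,xz-y,z)$, $Q_z(x,y,z)=(x,y,-xy-z)$ (involutions preserving $\kappa$), and $\Lambda=\langle Q_x,Q_y,Q_z\rangle$. $\Omega_0^M=\{(x,y,z): z<-2,\ xy+z>2\}$. For $u\in\Omega_0^M$ the binary tree $B_\Lambda(u)$ is defined inductively: $u$ is the root; its two descendents are $Q_x(u)$ (left) and $Q_y(u)$ (right); if $v\ne u$ is a node with parent $\hat v$ and $v=\lambda\hat v$ with $\lambda\in\{Q_x,Q_y,Q_z\}$, then the two descendents of $v$ are $\lambda_1v$ and $\lambda_2 v$ where $\{\lambda_1,\lambda_2\}=\{Q_x,Q_y,Q_z\}\setminus\{\lambda\}$. *)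

From Stdlib Require Import Reals.
Open Scope R_scope.

Definition pt : Type := (R * R * R)%type.

Definition kappa (u : pt) : R :=
  let '(x, y, z) := u in - x^2 - y^2 + z^2 + x*y*z - 2.

Definition zbar (u : pt) : R := let '(x, y, z) := u in - x*y - z.

Definition tau (u : pt) : R := let '(x, y, z) := u in - z * zbar u.

Definition Qx (u : pt) : pt := let '(x, y, z) := u in (y*z - x, y, z).
Definition Qy (u : pt) : pt := let '(x, y, z) := u in (x, x*z - y, z).
Definition Qz (u : pt) : pt := let '(x, y, z) := u in (x, y, - x*y - z).

Definition Omega0M (u : pt) : Prop :=
  let '(x, y, z) := u in z < -2 /\ x*y + z > 2.

Inductive gen := GX | GY | GZ.

Definition act (g : gen) : pt -> pt :=
  match g with GX => Qx | GY => Qy | GZ => Qz end.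

(* Labels of the two descendents (left, right) of a node, given the generator
   by which the node was obtained from its parent (None for the root). *)
Definition kids (l : option gen) : gen * gen :=
  match l with
  | None => (GX, GY)
  | Some GX => (GY, GZ)
  | Some GY => (GX, GZ)
  | Some GZ => (GX, GY)
  end.

(* Nodes of B_Lambda(u), as tree positions: [node u v l] means that some node
   of the tree carries the value v and was obtained from its parent by the
   generator l (l = None exactly for the root). *)
Inductive node (u : pt) : pt -> option gen -> Prop :=
| node_root : node u u None
| node_left : forall v l, node u v l ->
    node u (act (fst (kids l)) v) (Some (fst (kids l)))
| node_right : forall v l, node u v l ->
    node u (act (snd (kids l)) v) (Some (snd (kids l))).

From Stdlib Require Import Reals Lra Psatz.
Open Scope R_scope.

(* Each generator replaces one coordinate a by c - a, where c is the product of
   the two others (for Q_z, c = -xy); Q_x and Q_y change tau by (c - a)^2 - a^2,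
   while Q_z preserves tau.  Along the tree one propagates the sign of xyz and
   |z| > 2: at a node reached by Q_z (or the root) xyz < 0, so c and a have
   opposite signs and both flips strictly increase |a|; at a node reached by
   Q_x, xyz > 0 but |xz| > 2|y|, so the Q_y-flip still increases |y| strictly,
   and the Q_z-child is again of the first kind with tau unchanged. *)

Lemma flip_opposite (c a : R) : c * a < 0 ->
  0 < c * (c - a) /\ c^2 < (c - a)^2 /\ a^2 < (c - a)^2.
Proof. intro h. repeat split; nra. Qed.

Lemma flip_dominated (c a : R) : 0 < c * a -> 4 * a^2 < c^2 ->
  0 < c * (c - a) /\ c^2 < 4 * (c - a)^2 /\ a^2 < (c - a)^2.
Proof.
  intros hca hdom.
  assert (hlt : c * a < c^2 / 2) by nra.
  assert (hpos : c^2 / 2 < c * (c - a)) by nra.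
  repeat split; nra.
Qed.

Lemma tau_Qx (x y z : R) : tau (Qx (x, y, z)) - tau (x, y, z) = (y*z - x)^2 - x^2.
Proof. simpl; ring. Qed.

Lemma tau_Qy (x y z : R) : tau (Qy (x, y, z)) - tau (x, y, z) = (x*z - y)^2 - y^2.
Proof. simpl; ring. Qed.

Lemma tau_Qz (v : pt) : tau (Qz v) = tau v.
Proof. destruct v as [[x y] z]; simpl; ring. Qed.

Definition branch_inv (l : option gen) (v : pt) : Prop :=
  let '(x, y, z) := v in 4 < z^2 /\
  match l with
  | None | Some GZ => x*y*z < 0
  | Some GX => 0 < x*y*z /\ 4 * y^2 < (x*z)^2
  | Some GY => 0 < x*y*z /\ 4 * x^2 < (y*z)^2
  end.

Lemma Qx_of_opposite (x y z : R) : 4 < z^2 -> x*y*z < 0 ->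
  branch_inv (Some GX) (Qx (x, y, z)) /\ tau (x, y, z) < tau (Qx (x, y, z)).
Proof.
  intros hz hxyz; pose proof (tau_Qx x y z) as dtau; simpl in *.
  destruct (flip_opposite (y*z) x) as (hsgn & hgrow & htau); [nra|].
  repeat split; nra.
Qed.

Lemma Qy_of_opposite (x y z : R) : 4 < z^2 -> x*y*z < 0 ->
  branch_inv (Some GY) (Qy (x, y, z)) /\ tau (x, y, z) < tau (Qy (x, y, z)).
Proof.
  intros hz hxyz; pose proof (tau_Qy x y z) as dtau; simpl in *.
  destruct (flip_opposite (x*z) y) as (hsgn & hgrow & htau); [nra|].
  repeat split; nra.
Qed.

Lemma Qy_of_dominated (x y z : R) : 4 < z^2 -> 0 < x*y*z -> 4 * y^2 < (x*z)^2 ->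
  branch_inv (Some GY) (Qy (x, y, z)) /\ tau (x, y, z) < tau (Qy (x, y, z)).
Proof.
  intros hz hxyz hdom; pose proof (tau_Qy x y z) as dtau; simpl in *.
  destruct (flip_dominated (x*z) y) as (hsgn & hgrow & htau); [nra|nra|].
  repeat split; nra.
Qed.

Lemma Qx_of_dominated (x y z : R) : 4 < z^2 -> 0 < x*y*z -> 4 * x^2 < (y*z)^2 ->
  branch_inv (Some GX) (Qx (x, y, z)) /\ tau (x, y, z) < tau (Qx (x, y, z)).
Proof.
  intros hz hxyz hdom; pose proof (tau_Qx x y z) as dtau; simpl in *.
  destruct (flip_dominated (y*z) x) as (hsgn & hgrow & htau); [nra|nra|].
  repeat split; nra.
Qed.

Lemma Qz_of_positive (x y z : R) : 4 < z^2 -> 0 < x*y*z ->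
  branch_inv (Some GZ) (Qz (x, y, z)).
Proof.
  intros hz hxyz; simpl.
  destruct (flip_opposite (- x*y) z) as (hsgn & hgrow & htau); [nra|].
  split; nra.
Qed.

Lemma branch_inv_kids (l : option gen) (v : pt) : branch_inv l v ->
  let gl := fst (kids l) in
  let gr := snd (kids l) in
  (branch_inv (Some gl) (act gl v) /\ branch_inv (Some gr) (act gr v)) /\
  (tau v <= tau (act gl v) /\ tau v <= tau (act gr v) /\
   (tau v < tau (act gl v) \/ tau v < tau (act gr v))).
Proof.
  destruct v as [[x y] z]; intro hv.
  destruct l as [[| |]|]; cbn [branch_inv kids fst snd act] in hv |- *.
  - destruct hv as (hz & hxyz & hdom).
    destruct (Qy_of_dominated x y z hz hxyz hdom) as [hY htauY].
    pose proof (Qz_of_positive x y z hz hxyz) as hZ.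
    rewrite tau_Qz; split; [split; assumption | lra].
  - destruct hv as (hz & hxyz & hdom).
    destruct (Qx_of_dominated x y z hz hxyz hdom) as [hX htauX].
    pose proof (Qz_of_positive x y z hz hxyz) as hZ.
    rewrite tau_Qz; split; [split; assumption | lra].
  - destruct hv as (hz & hxyz).
    destruct (Qx_of_opposite x y z hz hxyz) as [hX htauX].
    destruct (Qy_of_opposite x y z hz hxyz) as [hY htauY].
    split; [split; assumption | lra].
  - destruct hv as (hz & hxyz).
    destruct (Qx_of_opposite x y z hz hxyz) as [hX htauX].
    destruct (Qy_of_opposite x y z hz hxyz) as [hY htauY].
    split; [split; assumption | lra].
Qed.

Lemma node_branch_inv (u v : pt) (l : option gen) :
  Omega0M u -> node u v l -> branch_inv l v.
Proof.
  intros hu hv; induction hv as [| v l _ IH | v l _ IH].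
  - destruct u as [[x y] z]; destruct hu; simpl; split; nra.
  - exact (proj1 (proj1 (branch_inv_kids l v IH))).
  - exact (proj2 (proj1 (branch_inv_kids l v IH))).
Qed.

Lemma node_tau_kids (u v : pt) (l : option gen) : Omega0M u -> node u v l ->
  tau v <= tau (act (fst (kids l)) v) /\ tau v <= tau (act (snd (kids l)) v) /\
  (tau v < tau (act (fst (kids l)) v) \/ tau v < tau (act (snd (kids l)) v)).
Proof. intros hu hv; exact (proj2 (branch_inv_kids l v (node_branch_inv u v l hu hv))). Qed.

Theorem mainTheorem8 (u : pt) (hu : Omega0M u) :
  (forall (v : pt) (l : option gen), node u v l ->
     let vl := act (fst (kids l)) v in
     let vr := act (snd (kids l)) v in
     tau v <= tau vl /\ tau v <= tau vr /\ (tau v < tau vl \/ tau v < tau vr))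
  /\ (forall (v : pt) (l : option gen), node u v l -> tau u <= tau v).
Proof.
  split; [exact (fun v l => node_tau_kids u v l hu) |].
  intros v l hv; induction hv as [| v l hv IH | v l hv IH].
  - apply Rle_refl.
  - destruct (node_tau_kids u v l hu hv) as [hl _]; lra.
  - destruct (node_tau_kids u v l hu hv) as [_ [hr _]]; lra.
Qed.
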